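(* Let $p\geq2$ be an integer and consider, on the domain $\{(\theta_1,\theta_p,I_1,I_p)\in\mathbb{T}^2\times(0,\infty)^2\}$, the Hamiltonian \[ \mathcal{G}^+(\theta_1,\theta_p,I_1,I_p):=\sqrt2^{\,1-p}\,I_1^{p/2}\sqrt{I_p}\,\cos(p\,\theta_1-\theta_p), \] with $(\theta_1,I_1)$ and $(\theta_p,I_p)$ canonically conjugate pairs. Let $\mathtt{c}>0$. Then for every sufficiently small $\varepsilon>0$ with $\mathtt{c}>p\varepsilon$ there exists an orbit $g^+_{\varepsilon,\mathtt{c}}(t)=(\theta_1(t),\theta_p(t),I_1(t),I_p(t))$ of $\mathcal{G}^+$ and a time $T_0>0$ such that \[ I_1(0)=\mathtt{c}-p\varepsilon,\quad I_p(0)=\varepsilon,\qquad I_1(T_0)=\mathtt{c}(1-p^{-1}),\quad I_p(T_0)=\frac{\mathtt{c}}{p^2}, \] and \[ \frac{\sqrt2^{\,p+1}}{\mathtt{c}^{\frac{p-1}{2}}}\,p^{-1}\le T_0\le\frac{\sqrt2^{\,p+1}}{\mathtt{c}^{\frac{p-1}{2}}\,(1-p^{-1})^{p/2}}\,p^{-1}. \]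
   Context: The orbit is a solution of Hamilton's equations $\dot\theta_k=\partial_{I_k}\mathcal{G}^+$, $\dot I_k=-\partial_{\theta_k}\mathcal{G}^+$, $k\in\{1,p\}$. ''Sufficiently small $\varepsilon$'' means $\varepsilon$ below a threshold that may depend on $\mathtt{c}$ and $p$. *)

From Stdlib Require Import Reals.
From Coquelicot Require Import Coquelicot.
Open Scope R_scope.

(* The Hamiltonian G^+ (angles lifted to R; actions I1, Ip > 0). *)
Definition Gplus (p : nat) (th1 thp I1 Ip : R) : R :=
  Rpower (sqrt 2) (1 - INR p) * Rpower I1 (INR p / 2) * sqrt Ip
  * cos (INR p * th1 - thp).

Definition hamilton_at (p : nat) (th1 thp I1 Ip : R -> R) (t : R) : Prop :=
  is_derive th1 t (Derive (fun x => Gplus p (th1 t) (thp t) x (Ip t)) (I1 t)) /\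
  is_derive thp t (Derive (fun x => Gplus p (th1 t) (thp t) (I1 t) x) (Ip t)) /\
  is_derive I1 t (- Derive (fun x => Gplus p x (thp t) (I1 t) (Ip t)) (th1 t)) /\
  is_derive Ip t (- Derive (fun x => Gplus p (th1 t) x (I1 t) (Ip t)) (thp t)).

From Stdlib Require Import Reals Lra Ranalysis5.
From Coquelicot Require Import Coquelicot.
Open Scope R_scope.

(* On the resonance th1 = 0, thp = pi/2 the cosine vanishes, so both angles
   stay put, and I1 + p Ip = c is conserved; Hamilton's equations reduce to
   the separable equation Ip' = sqrt2^(1-p) (c - p Ip)^(p/2) sqrt Ip.
   Inverting a primitive of the reciprocal rate gives the orbit, leaving
   Ip = eps and reaching Ip = c/p^2 at T0 = int_eps^(c/p^2) dy / rate(y).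
   On that range c (1 - 1/p) <= c - p y <= c, which bounds T0 by multiples
   of int dy / sqrt y.  For the lower bound the lost term 2 sqrt eps is paid
   for by the first order gain (c - p y)^(p/2) <= c^(p/2) (1 - p y / c),
   which is why eps has to be small. *)

Lemma Rpower_pos (x e : R) : 0 < Rpower x e.
Proof. apply exp_pos. Qed.

Lemma Rpower_1_base (e : R) : Rpower 1 e = 1.
Proof. unfold Rpower; rewrite ln_1, Rmult_0_r; exact exp_0. Qed.

Lemma Rpower_le_base (x e : R) : 0 < x <= 1 -> 1 <= e -> Rpower x e <= x.
Proof.
intros Hx He.
replace e with ((e - 1) + 1) by ring.
rewrite Rpower_plus, Rpower_1 by lra.
assert (H : Rpower x (e - 1) <= Rpower 1 (e - 1)) by (apply Rle_Rpower_l; lra).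
rewrite Rpower_1_base in H.
assert (Hx1 := Rpower_pos x (e - 1)).
nra.
Qed.

Lemma is_RInt_antiderivative (g G : R -> R) (u v : R) :
  u <= v -> (forall y, u <= y <= v -> is_derive G y (g y) /\ continuous g y) ->
  is_RInt g u v (G v - G u).
Proof.
intros Huv HG.
apply (is_RInt_derive G g); rewrite Rmin_left, Rmax_right by lra;
  intros y Hy; apply HG, Hy.
Qed.

Lemma antiderivative_le_RInt (f g G : R -> R) (u v : R) :
  u <= v -> ex_RInt f u v ->
  (forall y, u <= y <= v -> is_derive G y (g y) /\ continuous g y) ->
  (forall y, u < y < v -> g y <= f y) ->
  G v - G u <= RInt f u v.
Proof.
intros Huv Hf HG Hgf.
assert (HI := is_RInt_antiderivative g G u v Huv HG).
rewrite <- (is_RInt_unique _ _ _ _ HI).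
apply RInt_le; [exact Huv | eexists; exact HI | exact Hf | exact Hgf].
Qed.

Lemma RInt_le_antiderivative (f g G : R -> R) (u v : R) :
  u <= v -> ex_RInt f u v ->
  (forall y, u <= y <= v -> is_derive G y (g y) /\ continuous g y) ->
  (forall y, u < y < v -> f y <= g y) ->
  RInt f u v <= G v - G u.
Proof.
intros Huv Hf HG Hfg.
assert (HI := is_RInt_antiderivative g G u v Huv HG).
rewrite <- (is_RInt_unique _ _ _ _ HI).
apply RInt_le; [exact Huv | exact Hf | eexists; exact HI | exact Hfg].
Qed.

Section InverseOfIncreasing.

Variables (F h : R -> R) (a b : R).
Hypothesis a_lt_b : a < b.
Hypothesis F_derive : forall y, a <= y <= b -> is_derive F y (h y).
Hypothesis h_pos : forall y, a <= y <= b -> 0 < h y.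

Lemma increasing_of_pos_derive x y : a <= x -> x < y -> y <= b -> F x < F y.
Proof.
intros Hx Hxy Hy.
apply (incr_function_le F a b h); simpl; try lra.
- intros z Hz1 Hz2; apply F_derive; lra.
- intros z Hz1 Hz2; apply Rlt_gt, h_pos; lra.
Qed.

Lemma nondecreasing_of_pos_derive x y : a <= x -> x <= y -> y <= b -> F x <= F y.
Proof.
intros Hx [Hxy|<-] Hy; [|lra].
apply Rlt_le, increasing_of_pos_derive; lra.
Qed.

Lemma le_of_increasing x y : a <= x <= b -> a <= y <= b -> F x <= F y -> x <= y.
Proof.
intros Hx Hy HF.
destruct (Rle_lt_dec x y) as [Hle|Hlt]; [exact Hle|].
assert (F y < F x) by (apply increasing_of_pos_derive; lra).
lra.
Qed.

Lemma continuity_pt_of_derive y : a <= y <= b -> continuity_pt F y.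
Proof.
intros Hy.
apply continuity_pt_filterlim, (ex_derive_continuous (K := R_AbsRing) (V := R_NormedModule)).
exists (h y); now apply F_derive.
Qed.

Definition right_inverse (S : R -> R) : Prop :=
  forall t, F a <= t <= F b -> a <= S t <= b /\ F (S t) = t.

Lemma right_inverse_exists : exists S, right_inverse S.
Proof.
exists (fun t => match Rle_dec (F a) t, Rle_dec t (F b) with
  | left h1, left h2 =>
      proj1_sig (f_interv_is_interv F a b t a_lt_b (conj h1 h2) continuity_pt_of_derive)
  | _, _ => a
  end).
intros t Ht.
destruct (Rle_dec (F a) t) as [h1|]; [|lra].
destruct (Rle_dec t (F b)) as [h2|]; [|lra].
exact (proj2_sig (f_interv_is_interv F a b t a_lt_b (conj h1 h2) continuity_pt_of_derive)).
Qed.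

Variable S : R -> R.
Hypothesis S_right_inverse : right_inverse S.

Lemma right_inverse_cancel y : a <= y <= b -> S (F y) = y.
Proof.
intros Hy.
assert (HFy : F a <= F y <= F b).
{ split; apply nondecreasing_of_pos_derive; lra. }
destruct (S_right_inverse _ HFy) as [HS HFS].
apply Rle_antisym; apply le_of_increasing; lra.
Qed.

Lemma is_derive_right_inverse t : F a < t < F b -> is_derive S t (/ h (S t)).
Proof.
intros Ht.
assert (Hab : F a < F b) by (apply increasing_of_pos_derive; lra).
assert (HSa : S (F a) = a) by (apply right_inverse_cancel; lra).
assert (HSb : S (F b) = b) by (apply right_inverse_cancel; lra).
destruct (S_right_inverse t ltac:(lra)) as [HSt HFSt].
assert (Prf : forall z, S (F a) <= z <= S (F b) -> derivable_pt F z).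
{ intros z Hz; rewrite HSa, HSb in Hz.
  exists (h z); apply is_derive_Reals, F_derive, Hz. }
assert (HS_range : S (F a) <= S t <= S (F b)) by (rewrite HSa, HSb; exact HSt).
assert (HdF : derive_pt F (S t) (Prf (S t) HS_range) = h (S t)).
{ apply derive_pt_eq_0, is_derive_Reals, F_derive, HSt. }
assert (HS_cont : continuity_pt S t).
{ apply (continuity_pt_recip_interv F S a b a_lt_b increasing_of_pos_derive);
    [intros x Hx1 Hx2; apply (S_right_inverse x); lra
    |intros x Hx1 Hx2; apply (S_right_inverse x); lra
    |exact continuity_pt_of_derive
    |exact Ht]. }
apply is_derive_Reals.
replace (/ h (S t)) with (1 / derive_pt F (S t) (Prf (S t) HS_range))
  by (rewrite HdF; unfold Rdiv; ring).
apply (derivable_pt_lim_recip_interv F S (F a) (F b) t Prf HS_cont Hab Ht).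
- intros x Hx; apply S_right_inverse, Hx.
- rewrite HdF; specialize (h_pos _ HSt); lra.
Qed.

End InverseOfIncreasing.

Lemma ex_RInt_interior (g : R -> R) (lo hi u v : R) :
  (forall z, lo < z < hi -> continuous g z) -> lo < u < hi -> lo < v < hi ->
  ex_RInt g u v.
Proof.
intros Hg Hu Hv.
apply (ex_RInt_continuous (V := R_CompleteNormedModule)).
intros z [Hz1 Hz2]; apply Hg; split.
- apply Rlt_le_trans with (Rmin u v); [apply Rmin_glb_lt|]; lra.
- apply Rle_lt_trans with (Rmax u v); [|apply Rmax_lub_lt]; lra.
Qed.

Lemma is_derive_RInt_interior (g : R -> R) (lo hi y0 y : R) :
  (forall z, lo < z < hi -> continuous g z) -> lo < y0 < hi -> lo < y < hi ->
  is_derive (fun z => RInt g y0 z) y (g y).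
Proof.
intros Hg Hy0 Hy.
apply (is_derive_RInt g (fun z => RInt g y0 z) y0 y); [|apply Hg, Hy].
assert (Hr : 0 < Rmin (y - lo) (hi - y)) by (apply Rmin_glb_lt; lra).
exists (mkposreal _ Hr); intros z Hz.
change (Rabs (z - y) < Rmin (y - lo) (hi - y)) in Hz.
apply Rabs_def2 in Hz.
assert (Hm1 := Rmin_l (y - lo) (hi - y)).
assert (Hm2 := Rmin_r (y - lo) (hi - y)).
apply (RInt_correct (V := R_CompleteNormedModule)).
apply (ex_RInt_interior g lo hi); [exact Hg | lra | lra].
Qed.

Lemma separable_ode_solution (f : R -> R) (lo y0 y1 hi : R) :
  lo < y0 -> y0 < y1 -> y1 < hi ->
  (forall y, lo < y < hi -> 0 < f y /\ continuous f y) ->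
  let T := RInt (fun y => / f y) y0 y1 in
  0 < T /\
  exists S : R -> R, S 0 = y0 /\ S T = y1 /\
    forall t, 0 <= t <= T -> y0 <= S t <= y1 /\ is_derive S t (f (S t)).
Proof.
intros Hlo Hy01 Hhi Hf T.
set (g := fun y => / f y).
assert (Hg : forall y, lo < y < hi -> continuous g y).
{ intros y Hy; destruct (Hf y Hy) as [Hpos Hcont].
  apply continuous_Rinv_comp; [exact Hcont | lra]. }
set (F := fun y => RInt g y0 y).
(* Inverting F on [a, b], which is larger than [y0, y1], makes S
   differentiable at the end points t = 0 and t = T as well. *)
set (a := (lo + y0) / 2); set (b := (y1 + hi) / 2).
assert (HF : forall y, a <= y <= b -> is_derive F y (g y)).
{ intros y Hy; apply (is_derive_RInt_interior g lo hi); [exact Hg | |]; unfold a, b in *; lra. }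
assert (Hgpos : forall y, a <= y <= b -> 0 < g y).
{ intros y Hy; apply Rinv_0_lt_compat, Hf; unfold a, b in *; lra. }
assert (Hab : a < b) by (unfold a, b; lra).
assert (Hincr := increasing_of_pos_derive F g a b HF Hgpos).
assert (HFT : F y1 = T) by reflexivity.
assert (HF0 : F y0 = 0) by apply (RInt_point (V := R_CompleteNormedModule)).
assert (HFa : F a < 0) by (rewrite <- HF0; apply Hincr; unfold a, b in *; lra).
assert (HT : 0 < T) by (rewrite <- HF0; apply Hincr; unfold a, b in *; lra).
assert (HFb : T < F b) by (apply Hincr; unfold a, b in *; lra).
split; [exact HT|].
destruct (right_inverse_exists F g a b Hab HF) as [S HS].
exists S.
assert (Hcancel := right_inverse_cancel F g a b HF Hgpos S HS).
split; [rewrite <- HF0; apply Hcancel; unfold a, b in *; lra|].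
split; [apply Hcancel; unfold a, b in *; lra|].
intros t Ht.
destruct (HS t ltac:(lra)) as [HSt HFSt].
split.
- split; apply (le_of_increasing F g a b HF Hgpos); unfold a, b in *; lra.
- replace (f (S t)) with (/ g (S t)) by (unfold g; apply Rinv_inv).
  apply (is_derive_right_inverse F g a b Hab HF Hgpos S HS); lra.
Qed.

Definition resonant_rate (P c y : R) : R :=
  Rpower (sqrt 2) (1 - P) * Rpower (c - P * y) (P / 2) * sqrt y.

Lemma Derive_Gplus_at_resonance (p : nat) (I1 Ip : R) :
  let A := Rpower (sqrt 2) (1 - INR p) * Rpower I1 (INR p / 2) * sqrt Ip in
  Derive (fun x => Gplus p 0 (PI / 2) x Ip) I1 = 0 /\
  Derive (fun x => Gplus p 0 (PI / 2) I1 x) Ip = 0 /\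
  Derive (fun x => Gplus p x (PI / 2) I1 Ip) 0 = INR p * A /\
  Derive (fun x => Gplus p 0 x I1 Ip) (PI / 2) = - A.
Proof.
intros A; unfold Gplus.
assert (Hcos : cos (INR p * 0 - PI / 2) = 0).
{ replace (INR p * 0 - PI / 2) with (- (PI / 2)) by ring.
  now rewrite cos_neg, cos_PI2. }
assert (Hsin : sin (INR p * 0 + - (PI / 2)) = -1).
{ replace (INR p * 0 + - (PI / 2)) with (- (PI / 2)) by ring.
  now rewrite sin_neg, sin_PI2. }
rewrite Hcos.
repeat split.
- rewrite (Derive_ext _ (fun _ => 0)) by (intros; ring). apply Derive_const.
- rewrite (Derive_ext _ (fun _ => 0)) by (intros; ring). apply Derive_const.
- apply is_derive_unique; auto_derive; auto.
  rewrite Hsin; unfold A; ring.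
- apply is_derive_unique; auto_derive; auto.
  rewrite Hsin; unfold A; ring.
Qed.

Lemma hamilton_at_resonant_orbit (p : nat) (c : R) (Ip : R -> R) (t : R) :
  is_derive Ip t (resonant_rate (INR p) c (Ip t)) ->
  hamilton_at p (fun _ => 0) (fun _ => PI / 2) (fun s => c - INR p * Ip s) Ip t.
Proof.
intros HIp.
destruct (Derive_Gplus_at_resonance p (c - INR p * Ip t) (Ip t))
  as [Hd1 [Hdp [Hdth1 Hdthp]]].
unfold hamilton_at; rewrite Hd1, Hdp, Hdth1, Hdthp.
split; [apply is_derive_Reals, derivable_pt_lim_const|].
split; [apply is_derive_Reals, derivable_pt_lim_const|].
split.
- replace (- (INR p * _)) with (0 - INR p * resonant_rate (INR p) c (Ip t))
    by (unfold resonant_rate; ring).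
  apply is_derive_Reals, (derivable_pt_lim_minus (fun _ => c) (fun s => INR p * Ip s)).
  + apply derivable_pt_lim_const.
  + apply derivable_pt_lim_scal, is_derive_Reals, HIp.
- rewrite Ropp_involutive; exact HIp.
Qed.

Lemma resonant_rate_pos_continuous (P c y : R) :
  0 < P -> 0 < y < c / P ->
  0 < resonant_rate P c y /\ continuous (resonant_rate P c) y.
Proof.
intros HP [Hy HyP].
assert (Hc : P * y < c).
{ replace c with (P * (c / P)) by (field; lra). apply Rmult_lt_compat_l; lra. }
assert (Hsy := sqrt_lt_R0 y Hy).
split.
- unfold resonant_rate.
  apply Rmult_lt_0_compat; [apply Rmult_lt_0_compat; apply Rpower_pos | exact Hsy].
- apply (ex_derive_continuous (K := R_AbsRing) (V := R_NormedModule)).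
  unfold resonant_rate, Rpower; auto_derive; repeat split; lra.
Qed.

Section TransitTime.

Variables P c : R.
Hypothesis P_ge_2 : 2 <= P.
Hypothesis c_pos : 0 < c.

Let amplitude_inv (d : R) : R := / (Rpower (sqrt 2) (1 - P) * Rpower d (P / 2)).

Lemma amplitude_inv_pos d : 0 < amplitude_inv d.
Proof.
apply Rinv_0_lt_compat, Rmult_lt_0_compat; apply Rpower_pos.
Qed.

Lemma mul_le_div_P y : y <= c / P ^ 2 -> P * y <= c / P.
Proof.
intros Hy.
replace (c / P) with (P * (c / P ^ 2)) by (field; lra).
apply Rmult_le_compat_l; lra.
Qed.

Lemma div_P_lt : c / P < c.
Proof.
apply (Rmult_lt_reg_r P); [lra|].
replace (c / P * P) with c by (field; lra); nra.
Qed.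

Lemma div_P2_lt_div_P : c / P ^ 2 < c / P.
Proof.
apply Rmult_lt_reg_l with P; [lra|].
replace (P * (c / P ^ 2)) with (c / P) by (field; lra).
replace (P * (c / P)) with c by (field; lra).
exact div_P_lt.
Qed.

Lemma small_lt_div_P2 eps : 0 < eps < c / (36 * P ^ 4) -> eps < c / P ^ 2.
Proof.
intros Heps.
assert (HP4 : P ^ 2 <= 36 * P ^ 4).
{ replace (P ^ 4) with (P ^ 2 * P ^ 2) by ring. assert (4 <= P ^ 2) by nra. nra. }
apply Rlt_le_trans with (1 := proj2 Heps), Rmult_le_compat_l, Rinv_le_contravar; nra.
Qed.

Lemma inv_resonant_rate_le y :
  0 < y <= c / P ^ 2 -> / resonant_rate P c y <= amplitude_inv (c * (1 - / P)) * / sqrt y.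
Proof.
intros Hy.
assert (HPy := mul_le_div_P y (proj2 Hy)).
assert (Hd : c * (1 - / P) = c - c / P) by (field; lra).
assert (Hsy := sqrt_lt_R0 y (proj1 Hy)).
assert (HR : Rpower (c * (1 - / P)) (P / 2) <= Rpower (c - P * y) (P / 2)).
{ apply Rle_Rpower_l; [lra|]. rewrite Hd; assert (H := div_P_lt); lra. }
unfold resonant_rate, amplitude_inv; rewrite <- Rinv_mult.
assert (H1 := Rpower_pos (sqrt 2) (1 - P)).
assert (H2 := Rpower_pos (c * (1 - / P)) (P / 2)).
apply Rinv_le_contravar.
- apply Rmult_lt_0_compat; [apply Rmult_lt_0_compat|]; lra.
- apply Rmult_le_compat_r; [lra|]. apply Rmult_le_compat_l; lra.
Qed.

Lemma inv_resonant_rate_ge y :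
  0 < y <= c / P ^ 2 ->
  amplitude_inv c * (/ sqrt y + P / c * sqrt y) <= / resonant_rate P c y.
Proof.
intros Hy.
assert (HPy := mul_le_div_P y (proj2 Hy)).
set (x := P * y / c).
assert (Hx0 : 0 < x) by (unfold x; apply Rdiv_lt_0_compat; nra).
assert (Hx1 : x <= 1 / 2).
{ unfold x; apply (Rmult_le_reg_r c); [lra|].
  replace (P * y / c * c) with (P * y) by (field; lra).
  enough (c / P <= c / 2) by lra.
  apply Rmult_le_compat_l, Rinv_le_contravar; lra. }
assert (HR : Rpower (c - P * y) (P / 2) <= Rpower c (P / 2) * (1 - x)).
{ replace (c - P * y) with (c * (1 - x)) by (unfold x; field; lra).
  rewrite <- Rpower_mult_distr by lra.
  apply Rmult_le_compat_l; [apply Rlt_le, Rpower_pos|].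
  apply Rpower_le_base; lra. }
assert (Hxx : 1 + x <= / (1 - x)).
{ apply (Rmult_le_reg_r (1 - x)); [lra|]. rewrite Rinv_l by lra. nra. }
assert (Hs := sqrt_sqrt y (Rlt_le _ _ (proj1 Hy))).
assert (Hsy := sqrt_lt_R0 y (proj1 Hy)).
assert (Ha := Rpower_pos (sqrt 2) (1 - P)).
assert (Hc := Rpower_pos c (P / 2)).
assert (Hcy := Rpower_pos (c - P * y) (P / 2)).
replace (amplitude_inv c * (/ sqrt y + P / c * sqrt y))
  with (amplitude_inv c * (1 + x) * / sqrt y)
  by (unfold x; rewrite <- Hs at 1; field; split; lra).
apply Rle_trans with (amplitude_inv c * / (1 - x) * / sqrt y).
- apply Rmult_le_compat_r; [apply Rlt_le, Rinv_0_lt_compat; lra|].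
  apply Rmult_le_compat_l; [apply Rlt_le, amplitude_inv_pos | exact Hxx].
- unfold resonant_rate, amplitude_inv; rewrite <- !Rinv_mult.
  apply Rinv_le_contravar.
  + apply Rmult_lt_0_compat; [apply Rmult_lt_0_compat|]; lra.
  + replace (Rpower (sqrt 2) (1 - P) * Rpower c (P / 2) * (1 - x) * sqrt y)
      with (Rpower (sqrt 2) (1 - P) * (Rpower c (P / 2) * (1 - x)) * sqrt y) by ring.
    apply Rmult_le_compat_r; [lra|]. apply Rmult_le_compat_l; lra.
Qed.

Lemma amplitude_inv_time_scale d : 0 < d ->
  2 * sqrt (c / P ^ 2) * amplitude_inv (c * d)
  = Rpower (sqrt 2) (P + 1) / (Rpower c ((P - 1) / 2) * Rpower d (P / 2)) / P.
Proof.
intros Hd.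
assert (Hsqrt : sqrt (c / P ^ 2) = sqrt c / P).
{ rewrite sqrt_div by (lra || nra). rewrite sqrt_pow2 by lra. reflexivity. }
assert (Hsqrt2 : Rpower (sqrt 2) (P + 1) * Rpower (sqrt 2) (1 - P) = 2).
{ rewrite <- Rpower_plus. replace (P + 1 + (1 - P)) with (INR 2) by (simpl; ring).
  rewrite Rpower_pow by (apply sqrt_lt_R0; lra). simpl.
  rewrite Rmult_1_r. apply sqrt_sqrt; lra. }
assert (Hc : sqrt c * Rpower c ((P - 1) / 2) = Rpower c (P / 2)).
{ rewrite <- Rpower_sqrt, <- Rpower_plus by lra. f_equal; field. }
unfold amplitude_inv.
assert (H1 := Rpower_pos (sqrt 2) (1 - P)).
rewrite Hsqrt, <- Rpower_mult_distr, <- Hc by lra.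
replace (Rpower (sqrt 2) (P + 1)) with (2 / Rpower (sqrt 2) (1 - P))
  by (rewrite <- Hsqrt2 at 1; field; lra).
assert (H2 := Rpower_pos c ((P - 1) / 2)).
assert (H3 := Rpower_pos d (P / 2)).
assert (H4 := sqrt_lt_R0 c c_pos).
field; repeat split; lra.
Qed.

Lemma ex_RInt_inv_resonant_rate u v : 0 < u <= c / P ^ 2 -> 0 < v <= c / P ^ 2 ->
  ex_RInt (fun y => / resonant_rate P c y) u v.
Proof.
intros Hu Hv.
assert (HcP := div_P2_lt_div_P).
apply (ex_RInt_interior _ 0 (c / P)); [|lra|lra].
intros y Hy.
destruct (resonant_rate_pos_continuous P c y ltac:(lra) Hy) as [Hpos Hcont].
apply continuous_Rinv_comp; [exact Hcont | lra].
Qed.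

Lemma transit_time_upper eps : 0 < eps < c / P ^ 2 ->
  RInt (fun y => / resonant_rate P c y) eps (c / P ^ 2)
  <= Rpower (sqrt 2) (P + 1) / (Rpower c ((P - 1) / 2) * Rpower (1 - / P) (P / 2)) / P.
Proof.
intros Heps.
assert (HinvP : / P <= 1 / 2) by (apply Rle_trans with (/ 2); [apply Rinv_le_contravar|]; lra).
rewrite <- amplitude_inv_time_scale by lra.
set (K := amplitude_inv (c * (1 - / P))).
assert (HK : 0 < K) by apply amplitude_inv_pos.
eapply Rle_trans.
- apply (RInt_le_antiderivative _ (fun y => K * / sqrt y) (fun y => K * (2 * sqrt y)));
    [lra | apply ex_RInt_inv_resonant_rate; lra | |].
  + intros y Hy; assert (Hsy := sqrt_lt_R0 y ltac:(lra)); split.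
    * auto_derive; [lra | field; lra].
    * apply (ex_derive_continuous (K := R_AbsRing) (V := R_NormedModule)).
      auto_derive; repeat split; lra.
  + intros y Hy; apply inv_resonant_rate_le; lra.
- assert (Hse := sqrt_lt_R0 eps (proj1 Heps)). nra.
Qed.

Lemma lower_primitive_increment eps : 0 < eps < c / (36 * P ^ 4) ->
  2 * sqrt (c / P ^ 2)
  <= (2 * sqrt (c / P ^ 2) + 2 * P / (3 * c) * (c / P ^ 2 * sqrt (c / P ^ 2)))
     - (2 * sqrt eps + 2 * P / (3 * c) * (eps * sqrt eps)).
Proof.
intros Heps.
assert (HP4 : 2 * P <= P ^ 4).
{ replace (P ^ 4) with (P ^ 2 * P ^ 2) by ring. assert (4 <= P ^ 2) by nra. nra. }
assert (Heps_c : eps * (36 * P ^ 4) < c).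
{ destruct Heps as [_ H]. apply (Rmult_lt_compat_r (36 * P ^ 4)) in H; [|nra].
  replace (c / (36 * P ^ 4) * (36 * P ^ 4)) with c in H by (field; lra). exact H. }
assert (HecP := small_lt_div_P2 eps Heps).
set (s := sqrt (c / P ^ 2)); set (q := sqrt eps).
assert (Hs : s * s = c / P ^ 2) by (apply sqrt_sqrt; lra).
assert (Hq : q * q = eps) by (apply sqrt_sqrt; lra).
assert (Hs0 : 0 < s) by (apply sqrt_lt_R0; lra).
assert (Hq0 : 0 < q) by (apply sqrt_lt_R0; lra).
assert (Hqs : 6 * P * q < s).
{ apply Rnot_le_lt; intros Hle.
  assert (s * s <= 36 * P ^ 2 * (q * q)) by nra.
  assert (c <= 36 * P ^ 4 * eps); [|lra].
  replace c with (P ^ 2 * (s * s)) by (rewrite Hs; field; lra). nra. }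
assert (Hepsq : 2 * P / (3 * c) * eps <= 1).
{ apply (Rmult_le_reg_r (3 * c)); [lra|].
  replace (2 * P / (3 * c) * eps * (3 * c)) with (2 * P * eps) by (field; lra). nra. }
assert (Hgain : 2 * P / (3 * c) * (c / P ^ 2 * s) = 2 * s / (3 * P)) by (field; lra).
assert (Hloss : 2 * q + 2 * P / (3 * c) * (eps * q) <= 3 * q) by nra.
assert (3 * q < 2 * s / (3 * P)).
{ apply (Rmult_lt_reg_r (3 * P)); [lra|].
  replace (2 * s / (3 * P) * (3 * P)) with (2 * s) by (field; lra). nra. }
lra.
Qed.

Lemma transit_time_lower eps : 0 < eps < c / (36 * P ^ 4) ->
  Rpower (sqrt 2) (P + 1) / Rpower c ((P - 1) / 2) / P
  <= RInt (fun y => / resonant_rate P c y) eps (c / P ^ 2).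
Proof.
intros Heps.
assert (HecP := small_lt_div_P2 eps Heps).
assert (Hscale := amplitude_inv_time_scale 1 Rlt_0_1).
rewrite Rmult_1_r, Rpower_1_base, Rmult_1_r in Hscale.
rewrite <- Hscale.
set (K := amplitude_inv c).
assert (HK : 0 < K) by apply amplitude_inv_pos.
eapply Rle_trans; [|apply (antiderivative_le_RInt _
    (fun y => K * (/ sqrt y + P / c * sqrt y))
    (fun y => K * (2 * sqrt y + 2 * P / (3 * c) * (y * sqrt y))))].
- rewrite <- Rmult_minus_distr_l, Rmult_comm.
  apply Rmult_le_compat_l; [lra|].
  exact (lower_primitive_increment eps Heps).
- lra.
- apply ex_RInt_inv_resonant_rate; lra.
- intros y Hy; assert (Hsy := sqrt_lt_R0 y ltac:(lra)); split.
  + auto_derive; [lra|].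
    assert (Hyy := sqrt_sqrt y ltac:(lra)).
    set (r := sqrt y) in *; clearbody r; subst y; field; lra.
  + apply (ex_derive_continuous (K := R_AbsRing) (V := R_NormedModule)).
    auto_derive; repeat split; lra.
- intros y Hy; apply inv_resonant_rate_ge; lra.
Qed.

End TransitTime.

Theorem lemma3p3 (p : nat) (c : R) :
  (2 <= p)%nat -> 0 < c ->
  exists eps0 : R, 0 < eps0 /\
  forall eps : R, 0 < eps -> eps < eps0 -> INR p * eps < c ->
  exists (th1 thp I1 Ip : R -> R) (T0 : R),
    0 < T0 /\
    (forall t, 0 <= t <= T0 ->
       0 < I1 t /\ 0 < Ip t /\ hamilton_at p th1 thp I1 Ip t) /\
    I1 0 = c - INR p * eps /\ Ip 0 = eps /\
    I1 T0 = c * (1 - / INR p) /\ Ip T0 = c / (INR p ^ 2) /\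
    Rpower (sqrt 2) (INR p + 1) / Rpower c ((INR p - 1) / 2) / INR p <= T0 /\
    T0 <= Rpower (sqrt 2) (INR p + 1)
          / (Rpower c ((INR p - 1) / 2) * Rpower (1 - / INR p) (INR p / 2))
          / INR p.
Proof.
intros Hp Hc.
assert (HP : 2 <= INR p) by (apply (le_INR 2); exact Hp).
set (P := INR p) in *.
assert (HcP := div_P2_lt_div_P P c HP Hc).
exists (c / (36 * P ^ 4)); split.
{ apply Rdiv_lt_0_compat, Rmult_lt_0_compat, pow_lt; lra. }
(* The hypothesis [INR p * eps < c] is implied by [eps < eps0]. *)
intros eps Heps_pos Heps _.
assert (Heps_P2 := small_lt_div_P2 P c HP Hc eps (conj Heps_pos Heps)).
destruct (separable_ode_solution (resonant_rate P c) 0 eps (c / P ^ 2) (c / P))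
  as [HT [S [HS0 [HST HSsol]]]]; [lra | lra | lra | |].
{ intros y Hy; apply resonant_rate_pos_continuous; lra. }
set (T0 := RInt (fun y => / resonant_rate P c y) eps (c / P ^ 2)) in *.
exists (fun _ => 0), (fun _ => PI / 2), (fun t => c - P * S t), S, T0.
split; [exact HT|].
split.
{ intros t Ht; destruct (HSsol t Ht) as [HSt HSd].
  assert (HPS := mul_le_div_P P c HP (S t) (proj2 HSt)).
  assert (Hc1 := div_P_lt P c HP Hc).
  split; [lra|]; split; [lra|].
  apply hamilton_at_resonant_orbit, HSd. }
cbv beta; rewrite HS0, HST.
repeat split; [field; lra | apply transit_time_lower | apply transit_time_upper]; lra.
Qed.
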